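(* Let $S$ be a condensed space. If $I\subseteq\mathscr{C}(S)[x_1,\dots,x_n]$ is a Groebner ideal with Groebner basis $G=\{f_1,\dots,f_k\}$, then for any set $A\subseteq S$ of measure zero, $G|_{S-A}=\{f_1|_{S-A},\dots,f_k|_{S-A}\}$ is a Groebner basis of the ideal $I(S-A)\subseteq\mathscr{C}(S-A)[x_1,\dots,x_n]$.
   Context: $S\subseteq\mathbb{R}^m$ (Euclidean subspace topology). $\mathscr{P}(S)$ is the ring of restrictions to $S$ of complex polynomials in the $m$ real coordinates; a real algebraic subset of $S$ is the common zero set in $S$ of finitely many elements of $\mathscr{P}(S)$; $S$ is condensed if every real algebraic subset $V\ne S$ is nowhere dense in $S$. A set $A\subseteq S$ has measure zero if $A\neq S$ and $A=\bigcap_{i\ge1}\bigcup_{j\ge1}V_{ij}$ for some real algebraic subsets $V_{ij}$ of $S$. For $U\subseteq S$, $\mathscr{C}(U)$ denotes continuous complex-valued functions on $U$, and $I(U)$ is the ideal of $\mathscr{C}(U)[x_1,\dots,x_n]$ generated by restrictions to $U$ of elements of $I$. Fix a monomial ordering. For nonzero $h=\sum_\alpha a_\alpha x^\alpha\in\mathscr{C}(U)[x_1,\dots,x_n]$, let $\alpha_1$ be the largest multi-index with $a_{\alpha_1}$ not identically zero; $LT(h)=a_{\alpha_1}x^{\alpha_1}$, $LC(h)=a_{\alpha_1}$. A finite generating set $\{g_1,\dots,g_k\}$ of an ideal $J\subseteq\mathscr{C}(U)[x_1,\dots,x_n]$ is a Groebner basis if $\langle LT(g_1),\dots,LT(g_k)\rangle=\langle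 LT(J)\rangle$ (ideal generated by leading terms of all elements of $J$) and each $LC(g_i)$ is nowhere vanishing on $U$; $J$ is a Groebner ideal if it has a Groebner basis. *)

From HB Require Import structures.
From mathcomp Require Import all_boot all_order all_algebra.
From mathcomp Require Import mpoly.
From mathcomp Require Import all_classical all_reals topology normedtype.
From mathcomp.real_closed Require Import complex.
Import Order.TTheory GRing.Theory Num.Theory ComplexField.
Import numFieldNormedType.Exports.

Set Implicit Arguments.
Unset Strict Implicit.
Unset Printing Implicit Defensive.

Local Open Scope ring_scope.
Local Open Scope classical_set_scope.

(* The complex numbers over R, as a numClosedFieldType; through this
   structure they get the topology induced by the complex modulus. *)
Definition Cplx (R : realType) : numClosedFieldType := R[i].

Section GroebnerDefs.
Variables (R : realType) (m n : nat).

Definition real_eval (p : mpoly.mpoly m (Cplx R)) (x : 'rV[R]_m) : Cplx R :=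
  mpoly.meval (fun j => ((x ord0 j)%:C)%C : Cplx R) p.

(* V is a real algebraic subset of S: the common zero set in S of finitely
   many elements of P(S) (restrictions to S of complex polynomials). *)
Definition real_algebraic (S V : set 'rV[R]_m) : Prop :=
  exists ps : seq (mpoly.mpoly m (Cplx R)),
    V = [set x | S x /\ (forall p : mpoly.mpoly m (Cplx R), p \in ps -> real_eval p x = 0)].

(* V is nowhere dense in S (subspace topology): the interior in S of the
   closure of V in S is empty.  Relatively open sets of S are O `&` S with O
   open, and the closure of V in S is closure V `&` S. *)
Definition nowhere_dense_in (S V : set 'rV[R]_m) : Prop :=
  ~ (exists O : set 'rV[R]_m,
        [/\ open O, (O `&` S) !=set0 & (O `&` S) `<=` closure V]).

Definition condensed (S : set 'rV[R]_m) : Prop :=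
  forall V, real_algebraic S V -> V <> S -> nowhere_dense_in S V.

Definition measure_zero (S A : set 'rV[R]_m) : Prop :=
  A <> S /\
  exists V : nat -> nat -> set 'rV[R]_m,
    (forall i j, real_algebraic S (V i j)) /\
    A = \bigcap_i \bigcup_j V i j.

(* An element of C(U)[x_1..x_n] is represented by a polynomial whose
   coefficients are functions 'rV[R]_m -> Cplx R that are continuous on U
   (subspace topology); two such polynomials denote the same element iff
   their coefficients agree on U (only the restriction to U matters). *)
Definition cpoly := mpoly.mpoly n ('rV[R]_m -> Cplx R).
Definition monom := mpoly.multinom n.

Definition inC (U : set 'rV[R]_m) (p : cpoly) : Prop :=
  forall a : monom, {within U, continuous (mpoly.mcoeff a p)}.

Definition peq (U : set 'rV[R]_m) (p q : cpoly) : Prop :=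
  forall (a : monom) x, U x -> mpoly.mcoeff a p x = mpoly.mcoeff a q x.

Definition nz_on (U : set 'rV[R]_m) (f : 'rV[R]_m -> Cplx R) : Prop :=
  exists2 x, U x & f x <> 0.

Definition ideal_gen (U : set 'rV[R]_m) (X : set cpoly) : set cpoly :=
  fun p => inC U p /\
    exists s : seq (cpoly * cpoly),
      (forall hg, hg \in s -> inC U hg.1 /\ X hg.2) /\
      peq U p (\sum_(hg <- s) hg.1 * hg.2).

Definition is_ideal (U : set 'rV[R]_m) (J : set cpoly) : Prop :=
  [/\ (forall p, J p -> inC U p),
      (forall p q, J p -> inC U q -> peq U p q -> J q),
      J 0,
      (forall p q, J p -> J q -> J (p + q)) &
      (forall h p, inC U h -> J p -> J (h * p))].

Definition monomial_order (le : rel monom) : Prop :=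
  [/\ [/\ reflexive le, antisymmetric le, transitive le & total le],
      (forall a b c : monom, le a b -> le (mpoly.mnm_add a c) (mpoly.mnm_add b c)) &
      well_founded (fun a b : monom => le a b && (a != b))].

Definition is_LM (le : rel monom) (U : set 'rV[R]_m) (h : cpoly) (a : monom) : Prop :=
  nz_on U (mpoly.mcoeff a h) /\
  (forall b, nz_on U (mpoly.mcoeff b h) -> le b a).

Definition LT_of (le : rel monom) (U : set 'rV[R]_m) (h t : cpoly) : Prop :=
  exists a, is_LM le U h a /\ t = mpoly.mcoeff a h *: @mpoly.mpolyX n _ a.

Definition groebner_basis (le : rel monom) (U : set 'rV[R]_m)
    (J : set cpoly) (G : seq cpoly) : Prop :=
  [/\ (forall g, g \in G -> inC U g),
      (forall p, J p <-> ideal_gen U [set g | g \in G] p),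
      (forall p, ideal_gen U [set t | exists2 g, g \in G & LT_of le U g t] p <->
                 ideal_gen U [set t | exists h, J h /\ LT_of le U h t] p) &
      (forall g, g \in G -> exists a, is_LM le U g a /\
                   (forall x, U x -> mpoly.mcoeff a g x <> 0))].

Definition groebner_ideal (le : rel monom) (U : set 'rV[R]_m) (J : set cpoly) : Prop :=
  is_ideal U J /\ exists G, groebner_basis le U J G.

End GroebnerDefs.

From HB Require Import structures.
From mathcomp Require Import all_boot all_order all_algebra.
From mathcomp Require Import mpoly.
From mathcomp Require Import all_classical all_reals topology normedtype.
From mathcomp.real_closed Require Import complex.
Import Order.TTheory GRing.Theory Num.Theory ComplexField.
Import numFieldNormedType.Exports.
Set Implicit Arguments.
Unset Strict Implicit.
Unset Printing Implicit Defensive.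

Local Open Scope ring_scope.
Local Open Scope classical_set_scope.

(* Generators and nowhere vanishing leading coefficients
   restrict directly to U = S \ A; the point is the leading terms.  Let h be in
   I(U) with leading monomial a on U, and x in U with h_a(x) <> 0.  Freezing at
   x the coefficients of a representation h = sum c_i p_i (p_i in I) gives H in
   I with H(x) = h(x).  Cancelling the leading term of H on S against elements
   of G (possible by the Groebner property on S) leaves H(x) unchanged as long
   as the leading monomial differs from a, and terminates since the monomial
   order is well founded.  Hence LM(g) divides a for some g in G, and
   LT(h) = (h_a / LC(g)) x^(a - LM(g)) LT(g) on U since LC(g) vanishes nowhere. *)

Lemma rel_max_exists (T : eqType) (r : rel T) (s : seq T) x0 :
  transitive r -> total r -> x0 \in s -> exists2 b, b \in s & {in s, forall d, r d b}.
Proof.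
move=> tr to; have refl c : r c c by case/orP: (to c c).
elim: s x0 => [|c s IHs] x0 // _; case: s IHs => [|c' s] IHs.
  by exists c; rewrite ?mem_head // => d; rewrite mem_seq1 => /eqP->.
have [b bs bmax] := IHs c' (mem_head _ _).
have [cb | bc] := orP (to c b).
  exists b => [|d]; first by rewrite in_cons bs orbT.
  by rewrite in_cons => /orP[/eqP-> | /bmax].
exists c; rewrite ?mem_head // => d; rewrite in_cons => /orP[/eqP-> // | /bmax db].
exact: tr db bc.
Qed.

Lemma mcoeffMX_le (n : nat) (K : nzRingType) (p : {mpoly K[n]}) (e d : 'X_{1..n}) :
  (e <= d)%MM -> (p * 'X_[e])@_d = p@_(d - e)%MM.
Proof. by move=> ed; rewrite -{1}(submK ed) addmC mcoeffMX. Qed.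

Lemma mcoeffMX_nle (n : nat) (K : nzRingType) (p : {mpoly K[n]}) (e d : 'X_{1..n}) :
  ~~ (e <= d)%MM -> (p * 'X_[e])@_d = 0.
Proof.
move=> ed; apply/eqP; rewrite mcoeff_eq0 (perm_mem (msuppMX p e)).
by apply: contra ed => /mapP[d' _ ->]; apply: lem_addr.
Qed.

Section Groebner.
Variables (R : realType) (m n : nat).
Local Notation fn := ('rV[R]_m -> Cplx R).
Local Notation cp := (cpoly R m n).
Implicit Types (U S : set 'rV[R]_m) (p q h g : cp) (X Y : set cp).

Section WithinContinuity.
Variable U : set 'rV[R]_m.
Implicit Types f : fn.

Lemma within_continuous_cst (c : Cplx R) : {within U, continuous (fun _ => c)}.
Proof. exact/continuous_subspaceT/cst_continuous. Qed.

Lemma within_continuousD f f' :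
  {within U, continuous f} -> {within U, continuous f'} -> {within U, continuous (f + f')}.
Proof. by move=> cf cf' x; have := continuousD (cf x) (cf' x). Qed.

Lemma within_continuousM f f' :
  {within U, continuous f} -> {within U, continuous f'} -> {within U, continuous (f * f')}.
Proof. by move=> cf cf' x; have := continuousM (cf x) (cf' x). Qed.

Lemma within_continuousN f :
  {within U, continuous f} -> {within U, continuous (fun y => - f y)}.
Proof. by move=> cf x; have := continuousN (cf x). Qed.

Lemma within_continuousV f : {within U, continuous f} ->
  (forall x, U x -> f x != 0) -> {within U, continuous (fun y => (f y)^-1)}.
Proof.
move=> cf f_neq0; rewrite /from_subspace continuous_subspace_in => x.
by rewrite inE => Ux; have := continuousV (f_neq0 _ Ux) (cf x).
Qed.

Lemma within_continuous_sum (I : Type) (r : seq I) (P : pred I) (F : I -> fn) :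
  (forall i, P i -> {within U, continuous (F i)}) ->
  {within U, continuous (\sum_(i <- r | P i) F i)}.
Proof.
move=> cF; apply: (big_ind (fun k => {within U, continuous k})).
- exact: within_continuous_cst.
- exact: within_continuousD.
- exact: cF.
Qed.

End WithinContinuity.

Lemma inC_subset U S p : U `<=` S -> inC S p -> inC U p.
Proof. by move=> US Sp a; apply: continuous_subspaceW US (Sp a). Qed.

Lemma inC1 U : inC U (1 : cp).
Proof.
move=> a; rewrite mcoeff1.
by case: eqP => _; [exact: (@within_continuous_cst U 1) | exact: (@within_continuous_cst U 0)].
Qed.

Lemma inCM U p q : inC U p -> inC U q -> inC U (p * q).
Proof.
move=> Up Uq a; rewrite mcoeffM.
by apply: within_continuous_sum => k _; apply: within_continuousM.
Qed.

Lemma inC_scaleX U (f : fn) (e : monom n) : {within U, continuous f} -> inC U (f *: 'X_[e]).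
Proof.
move=> cf a; rewrite mcoeffZ mcoeffX.
by case: eqP => _; [rewrite mulr1 | rewrite mulr0; exact: (@within_continuous_cst U 0)].
Qed.

Definition coef_eval (x : 'rV[R]_m) (f : fn) : Cplx R := f x.

Lemma coef_eval_is_zmod_morphism x : zmod_morphism (coef_eval x). Proof. by []. Qed.
HB.instance Definition _ x :=
  GRing.isZmodMorphism.Build _ _ (coef_eval x) (coef_eval_is_zmod_morphism x).
Lemma coef_eval_is_monoid_morphism x : monoid_morphism (coef_eval x). Proof. by []. Qed.
HB.instance Definition _ x :=
  GRing.isMonoidMorphism.Build _ _ (coef_eval x) (coef_eval_is_monoid_morphism x).

Definition peval x (p : cp) : {mpoly (Cplx R)[n]} := map_mpoly (coef_eval x) p.

Lemma pevalD x p q : peval x (p + q) = peval x p + peval x q.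
Proof. by rewrite /peval rmorphD. Qed.

Lemma pevalM x p q : peval x (p * q) = peval x p * peval x q.
Proof. by rewrite /peval rmorphM. Qed.

Lemma peval_comb x (s : seq (cp * cp)) :
  peval x (\sum_(hg <- s) hg.1 * hg.2) = \sum_(hg <- s) peval x hg.1 * peval x hg.2.
Proof.
elim: s => [|hg s IHs]; first by rewrite !big_nil /peval rmorph0.
by rewrite !big_cons pevalD pevalM IHs.
Qed.

Lemma mcoeff_peval x p a : (peval x p)@_a = p@_a x.
Proof. exact: mcoeff_map_mpoly. Qed.

Lemma peval_mcoeff_eq x p q : peval x p = peval x q -> forall a, p@_a x = q@_a x.
Proof.
move=> pq a; apply: etrans (esym (mcoeff_peval x p a)) (etrans _ (mcoeff_peval x q a)).
by rewrite pq.
Qed.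

Lemma peq_peval U p q : peq U p q <-> forall x, U x -> peval x p = peval x q.
Proof.
split=> [pq x Ux | pq a x Ux]; last exact: peval_mcoeff_eq (pq x Ux) a.
apply/mpolyP => a.
exact: etrans (mcoeff_peval x p a) (etrans (pq a x Ux) (esym (mcoeff_peval x q a))).
Qed.

Lemma mcoeffZ_at (f : fn) p d (y : 'rV[R]_m) : (f *: p)@_d y = f y * p@_d y.
Proof. by rewrite mcoeffZ. Qed.

Lemma peq_scaleX U (f f' : fn) (e : monom n) :
  (forall y, U y -> f y = f' y) -> peq U (f *: 'X_[e]) (f' *: 'X_[e]).
Proof.
move=> ff' d y Uy.
apply: etrans (mcoeffZ_at _ _ _ _) (etrans _ (esym (mcoeffZ_at _ _ _ _))).
by rewrite ff'.
Qed.

Lemma eq_peq U p q : p = q -> peq U p q.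
Proof. by move->. Qed.

Lemma peq_trans U p q r : peq U p q -> peq U q r -> peq U p r.
Proof. by move=> pq qr a x Ux; rewrite pq // qr. Qed.

Definition coef_freeze (x : 'rV[R]_m) (f : fn) : fn := fun=> f x.
Lemma coef_freeze_is_zmod_morphism x : zmod_morphism (coef_freeze x). Proof. by []. Qed.
HB.instance Definition _ x :=
  GRing.isZmodMorphism.Build _ _ (coef_freeze x) (coef_freeze_is_zmod_morphism x).

Definition freeze x (p : cp) : cp := map_mpoly (coef_freeze x) p.

Lemma mcoeff_freeze x p a : (freeze x p)@_a = fun=> p@_a x.
Proof. exact: mcoeff_map_mpoly. Qed.

Lemma inC_freeze U x p : inC U (freeze x p).
Proof. by move=> a; rewrite mcoeff_freeze; apply: within_continuous_cst. Qed.

Lemma peval_freeze x p : peval x (freeze x p) = peval x p.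
Proof.
apply/mpolyP => a; apply: etrans (mcoeff_peval x _ a) (etrans _ (esym (mcoeff_peval x p a))).
by rewrite mcoeff_freeze.
Qed.

Section IdealGen.
Variable U : set 'rV[R]_m.

Lemma ideal_gen_mono X Y : X `<=` Y -> ideal_gen U X `<=` ideal_gen U Y.
Proof.
move=> XY p [Up [s [sX ps]]]; split; first exact: Up.
exists s; split; last exact: ps.
by move=> hg /sX[Uh Xg]; split; last exact: XY.
Qed.

Lemma ideal_gen_subset S X : U `<=` S -> ideal_gen S X `<=` ideal_gen U X.
Proof.
move=> US p [Sp [s [sX ps]]]; split; first exact: inC_subset Sp.
exists s; split=> [hg /sX[Sh Xg] | a x Ux]; last exact/ps/US.
by split; first exact: inC_subset US Sh.
Qed.

Lemma ideal_gen_mul X p c t :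
  inC U p -> inC U c -> X t -> peq U p (c * t) -> ideal_gen U X p.
Proof.
move=> Up Uc Xt pct; split; first exact: Up.
exists [:: (c, t)]; split.
  by move=> hg; rewrite mem_seq1 => /eqP ->.
by rewrite big_seq1.
Qed.

Lemma ideal_gen_self X p : inC U p -> X p -> ideal_gen U X p.
Proof.
move=> Up Xp; apply: (ideal_gen_mul Up (@inC1 U) Xp).
by move=> a x Ux; rewrite mul1r.
Qed.

Lemma ideal_gen_sum_trans X Y (s : seq (cp * cp)) :
  Y `<=` ideal_gen U X -> (forall hg, hg \in s -> inC U hg.1 /\ Y hg.2) ->
  exists2 s' : seq (cp * cp), (forall hg, hg \in s' -> inC U hg.1 /\ X hg.2) &
    peq U (\sum_(hg <- s) hg.1 * hg.2) (\sum_(hg <- s') hg.1 * hg.2).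
Proof.
move=> YX; elim: s => [|[h y] s IHs] sY; first by exists [::].
have [Uh Yy] := sY _ (mem_head _ _).
have [s0 s0X s_s0] : exists2 s0 : seq (cp * cp),
    (forall hg, hg \in s0 -> inC U hg.1 /\ X hg.2) &
    peq U (\sum_(hg <- s) hg.1 * hg.2) (\sum_(hg <- s0) hg.1 * hg.2).
  by apply: IHs => hg hgs; apply: sY; rewrite inE hgs orbT.
have [_ [t [tX y_t]]] := YX _ Yy.
exists ([seq (h * c.1, c.2) | c <- t] ++ s0).
  move=> hg; rewrite mem_cat => /orP[/mapP[c ct ->] | /s0X hg_s0]; last exact: hg_s0.
  have [Uc Xc] := tX _ ct; split; [exact: inCM Uh Uc | exact: Xc].
apply: (iffRL (peq_peval _ _ _)) => x Ux.
have y_tx := iffLR (peq_peval _ _ _) y_t x Ux.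
have s_s0x := iffLR (peq_peval _ _ _) s_s0 x Ux.
rewrite big_cons pevalD s_s0x pevalM y_tx -pevalM big_cat big_map pevalD /=.
have -> : h * \sum_(hg <- t) hg.1 * hg.2 = \sum_(j <- t) h * j.1 * j.2.
  by rewrite mulr_sumr; apply: eq_bigr => j _; rewrite mulrA.
reflexivity.
Qed.

Lemma ideal_gen_trans X Y : Y `<=` ideal_gen U X -> ideal_gen U Y `<=` ideal_gen U X.
Proof.
move=> YX p [Up [s [sY ps]]]; split; first exact: Up.
have [s' s'X s_s'] := ideal_gen_sum_trans YX sY.
by exists s'; split; last exact: peq_trans ps s_s'.
Qed.

End IdealGen.

Lemma is_ideal_sum U J (s : seq (cp * cp)) : is_ideal U J ->
  (forall hg, hg \in s -> inC U hg.1 /\ J hg.2) -> J (\sum_(hg <- s) hg.1 * hg.2).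
Proof.
move=> [_ _ J0 JD JM]; elim: s => [|hg s IHs] sJ; first by rewrite big_nil.
rewrite big_cons; have [Uh Jg] := sJ _ (mem_head _ _).
by apply: JD; [apply: JM | apply: IHs => hg' hg's; apply: sJ; rewrite inE hg's orbT].
Qed.

Lemma ideal_gen_freeze U S J p x : is_ideal S J -> ideal_gen U J p -> U x ->
  exists2 H, J H & peval x H = peval x p.
Proof.
move=> idJ [_ [s [sJ ps]]] Ux.
exists (\sum_(hg <- [seq (freeze x hg.1, hg.2) | hg <- s]) hg.1 * hg.2).
  apply: is_ideal_sum idJ _ => _ /mapP[hg hgs ->].
  split; [exact: inC_freeze | exact: (proj2 (sJ _ hgs))].
rewrite (iffLR (peq_peval _ _ _) ps x Ux) !peval_comb big_map.
by apply: eq_bigr => hg _; rewrite peval_freeze.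
Qed.

Lemma nz_on_at U (f : fn) x : U x -> f x != 0 -> nz_on U f.
Proof. by move=> Ux /eqP fx; exists x. Qed.

Section LeadingMonomials.
Variables (le : rel (monom n)) (U : set 'rV[R]_m).

Lemma is_LM_unique h a b : antisymmetric le -> is_LM le U h a -> is_LM le U h b -> a = b.
Proof. by move=> anti [ha hla] [hb hlb]; apply: anti; rewrite hla ?hlb. Qed.

Lemma is_LM_exists h a : transitive le -> total le ->
  nz_on U (h@_a) -> exists b, is_LM le U h b.
Proof.
move=> tr to ha; pose s := [seq d <- msupp h | `[< nz_on U (h@_d) >]].
have in_s d : nz_on U (h@_d) -> d \in s.
  move=> hd; rewrite mem_filter; apply/andP; split; first exact/asboolP.
  by case: hd => y _ hdy; rewrite mcoeff_msupp; apply/eqP => hd0; apply: hdy; rewrite hd0.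
have [b bs bmax] := rel_max_exists tr to (in_s a ha).
exists b; split; first by move: bs; rewrite mem_filter => /andP[/asboolP].
by move=> d /in_s; apply: bmax.
Qed.

Lemma is_LM_subset S g a y0 : U `<=` S -> U y0 -> is_LM le S g a ->
  (forall y, S y -> g@_a y <> 0) -> is_LM le U g a.
Proof.
move=> US Uy0 [_ amax] ga_neq0; split; first by exists y0 => //; apply/ga_neq0/US.
by move=> d [y Uy gdy]; apply: amax; exists y => //; apply: US.
Qed.

Lemma ideal_gen_LT_dvd (G : seq cp) p a x :
  ideal_gen U [set t | exists2 g, g \in G & LT_of le U g t] p -> U x -> p@_a x != 0 ->
  exists2 g, g \in G & exists b, is_LM le U g b /\ (b <= a)%MM.
Proof.
move=> [_ [s [sLT ps]]] Ux; apply: contraNP => no_dvd; apply/eqP.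
rewrite ps // raddf_sum fct_sumE big1_seq // => -[c t] /sLT[_ [g gG [b [bLM ->]]]] /=.
rewrite -scalerAr mcoeffZ mcoeffMX_nle ?mulr0 //.
by apply: contra_notN no_dvd => ba; exists g => //; exists b.
Qed.

End LeadingMonomials.

Section Restriction.
Variables (le : rel (monom n)) (S : set 'rV[R]_m) (I : set cp) (G : seq cp).
Hypotheses (ord : monomial_order le) (idI : is_ideal S I)
  (GB : groebner_basis le S I G).

(* The multiplier [H_b / g_c] vanishes wherever
   [H_b] does, so [H] is unchanged there. *)
Lemma reduce_LT H g b c : I H -> is_LM le S H b -> I g -> is_LM le S g c ->
  (forall y, S y -> g@_c y != 0) -> (c <= b)%MM ->
  exists2 H', I H' &
    (forall d, nz_on S (H'@_d) -> le d b && (d != b)) /\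
    (forall d y, H@_b y = 0 -> H'@_d y = H@_d y).
Proof.
have [_ mono _] := ord; have [inI _ _ ID IM] := idI.
move=> IH [_ bmax] Ig [_ cmax] gc_neq0 cb.
pose k : fn := fun y => - (H@_b y / g@_c y); pose e := (b - c)%MM.
have Hk : {within S, continuous k}.
  have := within_continuousN (within_continuousM (inI _ IH b)
    (within_continuousV (inI _ Ig c) gc_neq0)).
  exact.
have coefH' d y : (H + k *: 'X_[e] * g)@_d y = H@_d y + k y * (g * 'X_[e])@_d y.
  by rewrite -scalerAl commr_mpolyX mcoeffD mcoeffZ.
have Eb : b = (e + c)%MM by rewrite /e submK.
have H'b y : S y -> (H + k *: 'X_[e] * g)@_b y = 0.
  by move=> Sy; rewrite coefH' {2}Eb mcoeffMX /k mulNr divfK ?subrr ?gc_neq0.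
have H'0 d y : ~~ le d b -> S y -> (H + k *: 'X_[e] * g)@_d y = 0.
  move=> ndb Sy; rewrite coefH'.
  have -> : H@_d y = 0 by apply: contraNeq ndb => Hd; apply: bmax; exists y => //; apply/eqP.
  have [ed | ned] := boolP (e <= d)%MM; last by rewrite mcoeffMX_nle ?mulr0 ?addr0.
  rewrite mcoeffMX_le //; suff -> : g@_(d - e)%MM y = 0 by rewrite mulr0 addr0.
  apply: contraNeq ndb => /eqP gde; have := mono _ _ e (cmax _ (ex_intro2 _ _ y Sy gde)).
  by rewrite submK // (addmC c e) -Eb.
exists (H + k *: 'X_[e] * g); first exact: ID IH (IM _ _ (inC_scaleX Hk) Ig).
split=> [d [y Sy H'd] | d y Hb0]; last by rewrite coefH' /k Hb0 mul0r oppr0 mul0r addr0.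
have db : le d b by apply/negPn/negP => ndb; apply: H'd; apply: H'0.
by rewrite db; apply/eqP => db_eq; apply: H'd; rewrite db_eq H'b.
Qed.

Lemma basis_in_ideal g : g \in G -> I g.
Proof. by have [inG genG _ _] := GB; move=> gG; apply/genG/ideal_gen_self; first exact: inG. Qed.

(* If the coefficient of [x^a] is the last nonzero one at the point [x], some
   leading monomial of [G] divides [a]: reduce the leading term of [H] by [G]
   until it becomes [a]; the reductions do not change [H] at [x]. *)
Lemma LM_dvd_of_pointwise_leading H a x : I H -> S x -> H@_a x != 0 ->
  (forall d, H@_d x != 0 -> le d a) ->
  exists2 g, g \in G & exists c, is_LM le S g c /\ (c <= a)%MM.
Proof.
have [[_ anti tr to] _ wf] := ord; have [inI _ _ _ _] := idI; have [_ _ LTG GLC] := GB.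
move=> IH Sx Hax amax.
have [b bLM] : exists b, is_LM le S H b.
  exact: is_LM_exists tr to (nz_on_at Sx Hax).
elim/(well_founded_ind wf): b H IH Hax amax bLM => b IHb H IH Hax amax bLM.
have [[y Sy Hby] bmax] := bLM.
have ab : le a b := bmax a (nz_on_at Sx Hax).
have LT_H : ideal_gen S [set t | exists2 g, g \in G & LT_of le S g t] (H@_b *: 'X_[b]).
  apply/LTG; apply: ideal_gen_self; first exact/inC_scaleX/inI.
  by exists H; split; [exact: IH | exists b; split].
have LT_Hb : (H@_b *: 'X_[b] : cp)@_b y != 0.
  by rewrite mcoeffZ mcoeffX eqxx mulr1; apply/eqP.
have [g gG [c [cLM cb]]] := ideal_gen_LT_dvd LT_H Sy LT_Hb.
have [ba | nba] := eqVneq b a; first by exists g => //; exists c; rewrite -ba.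
have Hbx : H@_b x = 0.
  apply/eqP; apply: contraNT nba => /amax ba.
  by apply/eqP/anti; rewrite ab ba.
have [c' [c'LM gc_neq0]] := GLC g gG.
have gc_neq0' y' : S y' -> g@_c y' != 0.
  by rewrite -(is_LM_unique anti c'LM cLM) => Sy'; apply/eqP/gc_neq0.
have [H' IH' [H'lt H'x]] := reduce_LT IH bLM (basis_in_ideal gG) cLM gc_neq0' cb.
have H'dx d : H'@_d x = H@_d x := H'x d x Hbx.
have H'ax : H'@_a x != 0 by rewrite H'dx.
have [b' b'LM] := is_LM_exists tr to (nz_on_at Sx H'ax).
apply: (IHb b' (H'lt _ (proj1 b'LM)) H' IH' H'ax _ b'LM).
by move=> d; rewrite H'dx; apply: amax.
Qed.

Variables (U : set 'rV[R]_m) (y0 : 'rV[R]_m).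
Hypotheses (US : U `<=` S) (Uy0 : U y0).

Lemma LT_restrict h t : ideal_gen U I h -> LT_of le U h t ->
  ideal_gen U [set t | exists2 g, g \in G & LT_of le U g t] t.
Proof.
have [[_ anti _ _] _ _] := ord; have [inG _ _ GLC] := GB.
move=> Ih [a [[[x Ux hax] amax] ->]].
have [H IH Hx] := ideal_gen_freeze idI Ih Ux.
have Hdx := peval_mcoeff_eq Hx.
have Hax : H@_a x != 0 by rewrite Hdx; apply/eqP.
have Hmax d : H@_d x != 0 -> le d a.
  by rewrite Hdx => hdx; apply: amax (nz_on_at Ux hdx).
have [g gG [c [cLM ca]]] := LM_dvd_of_pointwise_leading IH (US Ux) Hax Hmax.
have [c' [c'LM gc_neq0]] := GLC g gG.
rewrite (is_LM_unique anti c'LM cLM) in gc_neq0.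
have gc_neq0U y : U y -> g@_c y != 0 by move=> Uy; apply/eqP/gc_neq0/US.
pose k : fn := fun y => h@_a y / g@_c y.
have Ug : inC U g := inC_subset US (inG g gG).
have Uk : {within U, continuous k}.
  have := within_continuousM (proj1 Ih a) (within_continuousV (Ug c) gc_neq0U).
  exact.
have E : k *: 'X_[(a - c)%MM] * (g@_c *: 'X_[c]) = (k * g@_c) *: 'X_[a].
  by rewrite -scalerAl -scalerAr scalerA -mpolyXD submK.
apply: (ideal_gen_mul (c := k *: 'X_[(a - c)%MM]) (t := g@_c *: 'X_[c])).
- exact: inC_scaleX (proj1 Ih a).
- exact: inC_scaleX Uk.
- exists g; first exact: gG.
  exists c; split; last reflexivity.
  exact: is_LM_subset US Uy0 cLM gc_neq0.
apply: (peq_trans (q := (k * g@_c) *: 'X_[a])); last exact: eq_peq (esym E).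
apply: peq_scaleX => y Uy.
by change (h@_a y = h@_a y / g@_c y * g@_c y); rewrite divfK ?gc_neq0U.
Qed.

Lemma groebner_basis_restrict : groebner_basis le U (ideal_gen U I) G.
Proof.
have [inG genG _ GLC] := GB.
split.
- by move=> g gG; apply: inC_subset US (inG g gG).
- move=> p; split.
    apply: ideal_gen_trans => q Iq.
    exact: ideal_gen_subset US _ (iffLR (genG q) Iq).
  by apply: ideal_gen_mono => g gG; apply: basis_in_ideal.
- move=> p; split; apply: ideal_gen_trans => t.
    move=> [g gG [c [cLM ->]]]; have Ug := inC_subset US (inG g gG).
    apply: ideal_gen_self; first exact: inC_scaleX (Ug c).
    exists g; split; first exact: ideal_gen_self Ug (basis_in_ideal gG).
    by exists c; split.
  by move=> [h [Ih hLT]]; apply: LT_restrict Ih hLT.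
- move=> g gG; have [c [cLM gc_neq0]] := GLC g gG.
  exists c; split; first exact: is_LM_subset US Uy0 cLM gc_neq0.
  by move=> y /US; apply: gc_neq0.
Qed.

End Restriction.

Lemma measure_zero_compl_nonempty S A : measure_zero S A -> (S `\` A) !=set0.
Proof.
move=> [AS [V [algV defA]]]; apply: contrapT => SA0; apply: AS.
apply/seteqP; split=> x.
  rewrite defA => /(_ 0%N Logic.I)[j _].
  by have [ps ->] := algV 0%N j; case.
by move=> Sx; apply: contrapT => nAx; apply: SA0; exists x.
Qed.

End Groebner.

Theorem mainTheorem6 (R : realType) (m n : nat) (le : rel (monom n))
    (S : set 'rV[R]_m) (I : set (cpoly R m n)) (G : seq (cpoly R m n)) :
  monomial_order le ->
  condensed S ->
  is_ideal S I ->
  groebner_basis le S I G ->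
  forall A : set 'rV[R]_m, measure_zero S A ->
    groebner_basis le (S `\` A) (ideal_gen (S `\` A) I) G.
Proof.
move=> ord _ idI GB A /measure_zero_compl_nonempty[y0 SAy0].
have := groebner_basis_restrict ord idI GB (@subDsetl _ S A) SAy0.
exact.
Qed.
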